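(* Let $\kappa$ be a regular cardinal, $A,B$ $\kappa$-additive complete atomic modal algebras and $f:A\to B$ a homomorphism of complete modal algebras. Then the map $F(f):\mathrm{At}(B)\to\mathrm{At}(A)$, $F(f)(b)=f_*(b)$, is a homomorphism of multi-relational Kripke frames from $F(B)$ to $F(A)$.
   Context: A modal algebra is a Boolean algebra $A$ with a unary operation $\Diamond$ satisfying $\Diamond 0=0$ and $\Diamond(x\vee y)=\Diamond x\vee\Diamond y$; it is complete if the Boolean reduct is complete, atomic if every non-zero element is the join of the atoms below it; $\mathrm{At}(A)$ is its set of atoms. It is $\kappa$-additive if $\Diamond\bigvee X=\bigvee_{x\in X}\Diamond x$ for all $X\subseteq A$ with $|X|<\kappa$. A homomorphism of complete modal algebras is a Boolean homomorphism preserving all joins and meets and commuting with $\Diamond$. For such $f:A\to B$, $f_{*}(b)=\bigwedge\{x\in A\mid b\leq f(x)\}$; it maps atoms to atoms. For $X\subseteq A$, $R(X)$ is the relation on $\mathrm{At}(A)$ with $a\,R(X)\,c\iff a\leq\bigwedge\{\Diamond x\mid x\in X,\ c\leq x\}$ (empty meet $=1$), and $F(A)=\langle\mathrm{At}(A),\{R(X)\mid X\subseteq A,|X|<\kappa\}\rangle$. A homomorphism of multi-relational Kripke frames $g:\langle W_1,S_1\rangle\to\langle W_2,S_2\rangle$ is a map $g:W_1\to W_2$ such that: (i) for every $x\in W_1$ and $R_2\in S_2$ there is $R_1\in S_1$ such that for all $y\in W_1$, $xR_1y$ implies $g(x)R_2g(y)$; (ii) for every $x\in W_1$ and $R_1\in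 S_1$ there is $R_2\in S_2$ such that for all $u\in W_2$, if $g(x)R_2u$ then there exists $y\in W_1$ with $xR_1y$ and $g(y)=u$. *)

Set Implicit Arguments.

Definition injective {T U : Type} (f : T -> U) := forall x y, f x = f y -> x = y.
Definition card_le (T U : Type) : Prop := exists f : T -> U, injective f.
Definition card_lt (T U : Type) : Prop := card_le T U /\ ~ card_le U T.

(* A cardinal kappa is represented by a type K of cardinality kappa.
   K is a regular cardinal: infinite, and a union (disjoint sum) of fewer
   than kappa sets each of size < kappa has size < kappa. *)
Definition regular_cardinal (K : Type) : Prop :=
  card_le nat K /\
  (forall (I : Type) (S : I -> Type),
      card_lt I K -> (forall i, card_lt (S i) K) -> card_lt {i : I & S i} K).

Definition small {T : Type} (K : Type) (X : T -> Prop) : Prop :=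
  card_lt {x : T | X x} K.

Record cba := CBA {
  car :> Type;
  le : car -> car -> Prop;
  sup : (car -> Prop) -> car;
  compl : car -> car;
  le_refl : forall x, le x x;
  le_antisym : forall x y, le x y -> le y x -> x = y;
  le_trans : forall x y z, le x y -> le y z -> le x z;
  sup_ub : forall (X : car -> Prop) x, X x -> le x (sup X);
  sup_least : forall (X : car -> Prop) z, (forall x, X x -> le x z) -> le (sup X) z;
  (* distributivity and complementation (stated via derived operations below) *)
  distr : forall x y z,
    sup (fun w => forall v, (v = x \/ v = sup (fun u => u = y \/ u = z)) -> le w v)
    = sup (fun u => u = sup (fun w => forall v, (v = x \/ v = y) -> le w v)
                 \/ u = sup (fun w => forall v, (v = x \/ v = z) -> le w v));
  compl_meet : forall x,
    sup (fun w => forall v, (v = x \/ v = compl x) -> le w v) = sup (fun _ => False);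
  compl_join : forall x,
    sup (fun u => u = x \/ u = compl x) = sup (fun _ => True)
}.

Arguments le {c} _ _.
Arguments sup {c} _.
Arguments compl {c} _.

Definition inf {A : cba} (X : A -> Prop) : A := sup (fun w => forall v, X v -> le w v).
Definition join {A : cba} (x y : A) : A := sup (fun u => u = x \/ u = y).
Definition meet {A : cba} (x y : A) : A := inf (fun u => u = x \/ u = y).
Definition bot {A : cba} : A := sup (fun _ => False).
Definition top {A : cba} : A := sup (fun _ => True).

Definition image {T U : Type} (f : T -> U) (X : T -> Prop) : U -> Prop :=
  fun y => exists x, X x /\ y = f x.

Record cma := CMA {
  ba :> cba;
  dia : ba -> ba;
  dia_bot : dia bot = bot;
  dia_join : forall x y, dia (join x y) = join (dia x) (dia y)
}.

Definition is_atom {A : cba} (a : A) : Prop :=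
  a <> bot /\ forall x, le x a -> x = bot \/ x = a.

Definition atomic (A : cba) : Prop :=
  forall x : A, x <> bot -> x = sup (fun a => is_atom a /\ le a x).

Definition additive (K : Type) (A : cma) : Prop :=
  forall X : A -> Prop, small K X -> dia A (sup X) = sup (image (dia A) X).

Definition cma_hom {A B : cma} (f : A -> B) : Prop :=
  (forall X : A -> Prop, f (sup X) = sup (image f X)) /\
  (forall X : A -> Prop, f (inf X) = inf (image f X)) /\
  (forall x y, f (join x y) = join (f x) (f y)) /\
  (forall x y, f (meet x y) = meet (f x) (f y)) /\
  f bot = bot /\ f top = top /\
  (forall x, f (compl x) = compl (f x)) /\
  (forall x, f (dia A x) = dia B (f x)).

(* lower adjoint f_*(b) = /\ { x in A | b <= f x } *)
Definition lower {A B : cma} (f : A -> B) (b : B) : A :=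
  inf (fun x : A => le b (f x)).

Record mframe := MFrame {
  wt : Type;
  worlds : wt -> Prop;
  idx : Type;
  rels : idx -> wt -> wt -> Prop
}.

Definition frame_hom (F1 F2 : mframe) (g : wt F1 -> wt F2) : Prop :=
  (forall x, worlds F1 x -> worlds F2 (g x)) /\
  (forall x, worlds F1 x -> forall i2 : idx F2, exists i1 : idx F1,
      forall y, worlds F1 y -> rels F1 i1 x y -> rels F2 i2 (g x) (g y)) /\
  (forall x, worlds F1 x -> forall i1 : idx F1, exists i2 : idx F2,
      forall u, worlds F2 u -> rels F2 i2 (g x) u ->
        exists y, worlds F1 y /\ rels F1 i1 x y /\ g y = u).

Definition relR {A : cma} (X : A -> Prop) (a c : A) : Prop :=
  le a (inf (fun y => exists x, X x /\ le c x /\ y = dia A x)).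

Definition frameF (K : Type) (A : cma) : mframe :=
  @MFrame (car A) (@is_atom A) {X : A -> Prop | small K X}
          (fun X => relR (proj1_sig X)).

(* F(f) = f_* maps atoms to atoms because f preserves complements, so an atom
   b lies below f x or below f (compl x).  Forth: for X in A, f_* sends
   R(f[X])-pairs to R(X)-pairs, since f commutes with the diamond and
   c <= f (f_* c).  Back: given an atom b and a small Y, let s be the join of
   those y in Y with b not below dia y, and take the single element f^*(s), the
   upper adjoint of f at s.  By additivity, b is not below dia s, so no atom
   below f^*(s) is an R({f^*(s)})-successor of f_* b; any other successor u has
   f u not below s, and an atom c below f u /\ compl s is an R(Y)-successor of
   b with f_* c = u. *)

From Stdlib Require Import Classical ClassicalEpsilon ProofIrrelevance.

Set Implicit Arguments.
Unset Strict Implicit.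

Section BooleanAlgebra.

Variable A : cba.
Implicit Types (x y z : A) (X Z : A -> Prop).

Lemma inf_lb X x : X x -> le (inf X) x.
Proof. intros Hx. apply sup_least. intros w Hw. exact (Hw x Hx). Qed.

Lemma le_inf X z : (forall x, X x -> le z x) -> le z (inf X).
Proof. intros H. apply sup_ub. exact H. Qed.

Lemma bot_le x : le bot x.
Proof. apply sup_least. intros _ []. Qed.

Lemma le_top x : le x top.
Proof. apply sup_ub. exact I. Qed.

Lemma le_bot_eq x : le x bot -> x = bot.
Proof. intros H. apply le_antisym; [exact H | apply bot_le]. Qed.

Lemma join_ub_l x y : le x (join x y).
Proof. apply sup_ub. left. reflexivity. Qed.

Lemma join_ub_r x y : le y (join x y).
Proof. apply sup_ub. right. reflexivity. Qed.

Lemma join_least x y z : le x z -> le y z -> le (join x y) z.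
Proof. intros Hx Hy. apply sup_least. intros w [-> | ->]; assumption. Qed.

Lemma join_le_eq x y : le x y -> join x y = y.
Proof.
  intros H. apply le_antisym.
  - apply join_least; [exact H | apply le_refl].
  - apply join_ub_r.
Qed.

Lemma meet_lb_l x y : le (meet x y) x.
Proof. apply inf_lb. left. reflexivity. Qed.

Lemma meet_lb_r x y : le (meet x y) y.
Proof. apply inf_lb. right. reflexivity. Qed.

Lemma le_meet x y z : le z x -> le z y -> le z (meet x y).
Proof. intros Hx Hy. apply le_inf. intros v [-> | ->]; assumption. Qed.

Lemma meet_comm x y : meet x y = meet y x.
Proof. apply le_antisym; apply le_meet; (apply meet_lb_l || apply meet_lb_r). Qed.

Lemma meet_join_distr x y z : meet x (join y z) = join (meet x y) (meet x z).
Proof. exact (distr A x y z). Qed.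

Lemma meet_compl x : meet x (compl x) = bot.
Proof. exact (compl_meet A x). Qed.

Lemma join_compl x : join x (compl x) = top.
Proof. exact (compl_join A x). Qed.

Lemma le_meet_compl_split x z :
  le x (join (meet x z) (meet x (compl z))).
Proof.
  rewrite <- meet_join_distr.
  apply le_meet; [apply le_refl |].
  rewrite join_compl. apply le_top.
Qed.

Lemma le_of_meet_compl x z : meet x (compl z) = bot -> le x z.
Proof.
  intros H. eapply le_trans; [apply (le_meet_compl_split x z) |].
  rewrite H. apply join_least; [apply meet_lb_r | apply bot_le].
Qed.

Lemma le_compl_of_meet x z : meet x z = bot -> le x (compl z).
Proof.
  intros H. eapply le_trans; [apply (le_meet_compl_split x z) |].
  rewrite H. apply join_least; [apply bot_le | apply meet_lb_r].
Qed.

Lemma le_compl_bot x z : le x z -> le x (compl z) -> x = bot.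
Proof.
  intros Hz Hc. apply le_bot_eq.
  rewrite <- (meet_compl z). exact (le_meet Hz Hc).
Qed.

Lemma le_compl_sym x z : le x (compl z) -> le z (compl x).
Proof.
  intros H. apply le_compl_of_meet, le_bot_eq.
  rewrite meet_comm, <- (meet_compl z).
  apply le_meet; [apply meet_lb_r | eapply le_trans; [apply meet_lb_l | exact H]].
Qed.

Lemma atom_le_or_le_compl (b : A) z : is_atom b -> le b z \/ le b (compl z).
Proof.
  intros [_ Hb]. destruct (Hb (meet b z) (meet_lb_l b z)) as [H | H].
  - right. apply le_compl_of_meet. exact H.
  - left. rewrite <- H. apply meet_lb_r.
Qed.

Lemma atom_le_sup (b : A) Z : is_atom b -> le b (sup Z) -> exists z, Z z /\ le b z.
Proof.
  intros Hb H. apply NNPP. intros Hn.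
  assert (HZ : le (sup Z) (compl b)).
  { apply sup_least. intros z Hz.
    destruct (atom_le_or_le_compl z Hb) as [Hbz | Hbz].
    - exfalso. apply Hn. exists z. split; assumption.
    - apply le_compl_sym. exact Hbz. }
  apply (proj1 Hb), (le_compl_bot (le_refl A b)), (le_trans _ _ _ _ H HZ).
Qed.

Lemma atomic_atom_below x : atomic A -> x <> bot -> exists a, is_atom a /\ le a x.
Proof.
  intros HA Hx. apply NNPP. intros Hn. apply Hx.
  rewrite (HA x Hx). apply le_bot_eq, sup_least.
  intros a Ha. exfalso. apply Hn. exists a. exact Ha.
Qed.

End BooleanAlgebra.

Lemma join_hom_monotone (A B : cba) (g : A -> B) :
  (forall x y, g (join x y) = join (g x) (g y)) ->
  forall x y, le x y -> le (g x) (g y).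
Proof.
  intros Hg x y H. rewrite <- (join_le_eq H), Hg. apply join_ub_l.
Qed.

Lemma dia_monotone (A : cma) (x y : A) : le x y -> le (dia A x) (dia A y).
Proof. apply join_hom_monotone, dia_join. Qed.

Section Smallness.

Variable K : Type.

Lemma card_le_lt (T U : Type) : card_le T U -> card_lt U K -> card_lt T K.
Proof.
  intros [h Hh] [[g Hg] Hn]. split.
  - exists (fun t => g (h t)). intros t t' E. apply Hh, Hg, E.
  - intros [k Hk]. apply Hn. exists (fun a => h (k a)). intros a a' E. apply Hk, Hh, E.
Qed.

Lemma small_sub (T : Type) (X Z : T -> Prop) :
  (forall x, Z x -> X x) -> small K X -> small K Z.
Proof.
  intros HZ. apply card_le_lt.
  exists (fun p => exist X (proj1_sig p) (HZ _ (proj2_sig p))).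
  intros [x Hx] [y Hy] E. apply subset_eq_compat.
  exact (f_equal (@proj1_sig _ _) E).
Qed.

Lemma small_image (T U : Type) (f : T -> U) (X : T -> Prop) :
  small K X -> small K (image f X).
Proof.
  apply card_le_lt.
  exists (fun p => let w := constructive_indefinite_description _ (proj2_sig p) in
                   exist X (proj1_sig w) (proj1 (proj2_sig w))).
  intros [y Hy] [y' Hy'] E. apply subset_eq_compat.
  apply (f_equal (@proj1_sig _ _)) in E. simpl in E.
  destruct (constructive_indefinite_description _ Hy) as [x [Hx Ey]].
  destruct (constructive_indefinite_description _ Hy') as [x' [Hx' Ey']].
  simpl in E. rewrite Ey, Ey', E. reflexivity.
Qed.

Lemma small_singleton (T : Type) (x0 : T) : regular_cardinal K -> small K (fun x => x = x0).
Proof.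
  intros [[n Hn] _].
  assert (Hsub : forall p q : {x | x = x0}, p = q).
  { intros [x Hx] [y Hy]. apply subset_eq_compat. congruence. }
  split.
  - exists (fun _ => n 0). intros p q _. apply Hsub.
  - intros [k Hk]. assert (E : n 0 = n 1) by (apply Hk, Hsub).
    apply Hn in E. discriminate.
Qed.

End Smallness.

Section Adjoints.

Variables (A B : cma) (f : A -> B).
Hypothesis Hf : cma_hom f.

Lemma hom_monotone (x y : A) : le x y -> le (f x) (f y).
Proof. apply join_hom_monotone. apply Hf. Qed.

Lemma lower_le (b : B) (x : A) : le b (f x) -> le (lower f b) x.
Proof. intros H. unfold lower. apply inf_lb. exact H. Qed.

Lemma le_f_lower (b : B) : le b (f (lower f b)).
Proof.
  destruct Hf as (_ & Hinf & _). unfold lower. rewrite Hinf.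
  apply le_inf. intros v [x [Hx ->]]. exact Hx.
Qed.

Lemma lower_neq_bot (b : B) : b <> bot -> lower f b <> bot.
Proof.
  intros Hb E. apply Hb, le_bot_eq.
  destruct Hf as (_ & _ & _ & _ & Hbot & _).
  rewrite <- Hbot, <- E. apply le_f_lower.
Qed.

Lemma lower_atom (b : B) : is_atom b -> is_atom (lower f b).
Proof.
  intros Hb. split; [apply lower_neq_bot, (proj1 Hb) |].
  intros x Hx. destruct (atom_le_or_le_compl (f x) Hb) as [H | H].
  - right. apply le_antisym; [exact Hx | apply lower_le, H].
  - left. apply (le_compl_bot (le_refl _ x)).
    eapply le_trans; [exact Hx |]. apply lower_le.
    destruct Hf as (_ & _ & _ & _ & _ & _ & Hcompl & _). rewrite Hcompl. exact H.
Qed.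

Definition upper (s : B) : A := sup (fun x : A => le (f x) s).

Lemma le_upper (x : A) (s : B) : le (f x) s -> le x (upper s).
Proof. intros H. unfold upper. apply sup_ub. exact H. Qed.

Lemma f_upper_le (s : B) : le (f (upper s)) s.
Proof.
  destruct Hf as (Hsup & _). unfold upper. rewrite Hsup.
  apply sup_least. intros w [x [Hx ->]]. exact Hx.
Qed.

Lemma relR_lower_of_image (X : A -> Prop) (b c : B) :
  relR (image f X) b c -> relR X (lower f b) (lower f c).
Proof.
  intros Hbc. apply le_inf. intros v [x [HXx [Hcx ->]]].
  apply lower_le. destruct Hf as (_ & _ & _ & _ & _ & _ & _ & Hdia). rewrite Hdia.
  eapply le_trans; [exact Hbc |]. apply inf_lb.
  exists (f x). split; [exists x; split; auto | split; [| reflexivity]].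
  eapply le_trans; [apply le_f_lower | apply hom_monotone, Hcx].
Qed.

End Adjoints.

Section BackCondition.

Variables (K : Type) (A B : cma) (f : A -> B).
Hypotheses (HaddB : additive K B) (HatB : atomic B) (Hf : cma_hom f).

Definition missed (b : B) (Y : B -> Prop) : B -> Prop :=
  fun y => Y y /\ ~ le b (dia B y).

Lemma atom_not_le_dia_missed (b : B) (Y : B -> Prop) :
  is_atom b -> small K Y -> ~ le b (dia B (sup (missed b Y))).
Proof.
  intros Hb HY Hle.
  assert (Hsmall : small K (missed b Y)) by exact (small_sub (fun y Hy => proj1 Hy) HY).
  rewrite (HaddB Hsmall) in Hle.
  destruct (atom_le_sup Hb Hle) as [z [[y [[_ Hy] ->]] Hbz]].
  exact (Hy Hbz).
Qed.

Lemma relR_of_le_compl_missed (b c : B) (Y : B -> Prop) :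
  is_atom c -> le c (compl (sup (missed b Y))) -> relR Y b c.
Proof.
  intros Hc Hcs. apply le_inf. intros v [y [Hy [Hcy ->]]].
  apply NNPP. intros Hn. apply (proj1 Hc).
  apply (le_compl_bot (z := sup (missed b Y))); [| exact Hcs].
  eapply le_trans; [exact Hcy |]. apply sup_ub. split; assumption.
Qed.

Lemma lower_rel_back (b : B) (Y : B -> Prop) (u : A) :
  is_atom b -> small K Y -> is_atom u ->
  relR (fun x => x = upper f (sup (missed b Y))) (lower f b) u ->
  exists c, is_atom c /\ relR Y b c /\ lower f c = u.
Proof.
  set (s := sup (missed b Y)). intros Hb HY Hu Hrel.
  destruct (classic (le u (upper f s))) as [Hus | Hus].
  - exfalso. apply (atom_not_le_dia_missed Hb HY).
    assert (Hle : le (lower f b) (dia A (upper f s))).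
    { eapply le_trans; [exact Hrel |]. apply inf_lb. exists (upper f s). auto. }
    eapply le_trans; [apply (le_f_lower Hf) |].
    eapply le_trans; [apply (hom_monotone Hf Hle) |].
    destruct Hf as (_ & _ & _ & _ & _ & _ & _ & Hdia). rewrite Hdia.
    apply dia_monotone, f_upper_le, Hf.
  - assert (Hw : meet (f u) (compl s) <> bot).
    { intros E. apply Hus, le_upper, le_of_meet_compl, E. }
    destruct (atomic_atom_below HatB Hw) as [c [Hc Hcw]].
    exists c. split; [exact Hc | split].
    + apply relR_of_le_compl_missed; [exact Hc |].
      eapply le_trans; [exact Hcw | apply meet_lb_r].
    + assert (Hcu : le (lower f c) u).
      { apply lower_le. eapply le_trans; [exact Hcw | apply meet_lb_l]. }
      destruct (proj2 Hu _ Hcu) as [E | E]; [| exact E].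
      exfalso. exact (lower_neq_bot Hf (proj1 Hc) E).
Qed.

End BackCondition.

Theorem proposition7p5 (K : Type) (A B : cma) (f : A -> B) :
  regular_cardinal K ->
  additive K A -> atomic A ->
  additive K B -> atomic B ->
  cma_hom f ->
  frame_hom (frameF K B) (frameF K A) (lower f).
Proof.
  intros HK _ _ HaddB HatB Hf. split; [| split].
  - intros b Hb. exact (lower_atom Hf Hb).
  - intros b _ [X HX].
    exists (exist _ (image f X) (small_image f HX)). simpl.
    intros c _. apply (relR_lower_of_image Hf).
  - intros b Hb [Y HY].
    exists (exist _ _ (small_singleton (upper f (sup (missed b Y))) HK)). simpl.
    intros u Hu. exact (lower_rel_back HaddB HatB Hf Hb HY Hu).
Qed.
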